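(* For every $m\in\mathbb{N}_0$ and every real $t$ with $|t|<1$, \[ \frac{(\operatorname{arcsinh} t)^{m}}{\sqrt{1+t^2}}=t^m\left[1+\sum_{k=1}^{\infty}\frac{Q(m+1,2k;2)}{\binom{m+2k}{m}}\frac{(2t)^{2k}}{(2k)!}\right]. \]
   Context: $s(n,k)$ denotes the signed Stirling numbers of the first kind, defined by $\frac{[\ln(1+x)]^k}{k!}=\sum_{n=k}^\infty s(n,k)\frac{x^n}{n!}$ for $|x|<1$; equivalently $\prod_{j=0}^{n-1}(z-j)=\sum_{k=0}^n s(n,k)z^k$. For $m\in\mathbb{N}$, $k\in\mathbb{N}_0$ and $\alpha\in\mathbb{R}$ define \[ Q(m,k;\alpha)=\sum_{\ell=0}^{k}\binom{m+\ell-1}{m-1}\, s(m+k-1,m+\ell-1)\left(\frac{m+k-\alpha}{2}\right)^{\ell}, \] with the convention $0^0=1$. *)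

From Stdlib Require Import Reals.
From Coquelicot Require Import Coquelicot.
Open Scope R_scope.

(* Signed Stirling numbers of the first kind s(n,k), defined by the
   standard recurrence equivalent to prod_{j<n} (z - j) = sum_k s(n,k) z^k:
   s(0,0)=1, s(0,k+1)=0, s(n+1,0)=0, s(n+1,k+1) = s(n,k) - n s(n,k+1). *)
Fixpoint stirling1 (n k : nat) {struct n} : R :=
  match n, k with
  | O, O => 1
  | O, S _ => 0
  | S _, O => 0
  | S n', S k' => stirling1 n' k' - INR n' * stirling1 n' (S k')
  end.

(* Q(m,k;alpha) = sum_{l=0}^k C(m+l-1, m-1) s(m+k-1, m+l-1) ((m+k-alpha)/2)^l
   (intended for m >= 1; Stdlib's pow has 0^0 = 1). *)
Definition Q (m k : nat) (alpha : R) : R :=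
  sum_f_R0 (fun l => Binomial.C (m + l - 1) (m - 1)
                     * stirling1 (m + k - 1) (m + l - 1)
                     * ((INR (m + k) - alpha) / 2) ^ l) k.

From Stdlib Require Import Reals Lia Lra Psatz.
From Coquelicot Require Import Coquelicot.
Open Scope R_scope.

(* Write y_m(t) = (arcsinh t)^m / sqrt(1+t^2) = sum_n (m!/n!) t(n,m) t^n.
   Differentiating sqrt(1+t^2) y_m = (arcsinh t)^m gives the differential
   equation (1+t^2) y_m' + t y_m = m (arcsinh t)^(m-1), which on coefficients
   is the recurrence t(n+2,m) = t(n,m-2) - (n+1)^2 t(n,m), t(0,m) = [m=0],
   t(1,m) = [m=1].

   1. Combinatorics: t(N,m) 2^m = 2^N [z^m] prod_{j<N} (z + (N-1)/2 - j),
      the Taylor coefficient of a centred falling factorial; expanding the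
      falling factorial with Stirling numbers identifies it with Q, giving
      t(m+2k,m) = 4^k Q(m+1,2k;2).  The recurrence for t comes from
      multiplying the product by (z + (N+1)/2)(z - (N+1)/2).
   2. Analysis: defining the series of y_m by the numbers t(n,m) and that of
      (arcsinh t)^m as termwise antiderivatives, both closed forms hold on
      (-1,1), by a joint induction on m: in each step a function with
      vanishing derivative on (-1,1) and vanishing at 0 is shown to be zero.
   3. Assembly: the Taylor series of y_m starts with t^m and only has degrees
      m + 2k, whose terms are t^m times the terms of the theorem; comparing
      partial sums along the subsequence m + 2(J+1) gives the identity. *)

(* Binomial coefficients given by Pascal's rule.  Unlike [Binomial.C] they
   vanish above the diagonal, so Pascal's rule holds without side condition. *)
Fixpoint binom (n k : nat) : R :=
  match n, k with
  | O, O => 1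
  | O, S _ => 0
  | S _, O => 1
  | S n', S k' => binom n' k' + binom n' (S k')
  end.

Lemma binom_0 n : binom n 0 = 1.
Proof. destruct n; reflexivity. Qed.

Lemma binom_above n k : (n < k)%nat -> binom n k = 0.
Proof.
  revert k; induction n as [|n IH]; intros [|k] Hk; simpl; try lia; try reflexivity.
  rewrite !IH by lia. ring.
Qed.

Lemma binom_C n k : (k <= n)%nat -> binom n k = Binomial.C n k.
Proof.
  revert k; induction n as [|n IH]; intros [|k] Hk.
  - rewrite C_n_0. reflexivity.
  - lia.
  - rewrite C_n_0. reflexivity.
  - simpl. destruct (Nat.eq_dec k n) as [->|Hkn].
    + rewrite (binom_above n (S n)), IH, !C_n_n by lia. ring.
    + rewrite !IH by lia. apply pascal. lia.
Qed.

Lemma stirling1_above n k : (n < k)%nat -> stirling1 n k = 0.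
Proof.
  revert k; induction n as [|n IH]; intros [|k] Hk; simpl; try lia; try reflexivity.
  rewrite !IH by lia. ring.
Qed.

Lemma stirling1_S N j :
  stirling1 (S N) j =
  match j with O => 0 | S j' => stirling1 N j' end - INR N * stirling1 N j.
Proof. destruct j; [destruct N; simpl; ring | reflexivity]. Qed.

Lemma sum_f_R0_first (f : nat -> R) n :
  sum_f_R0 f (S n) = f O + sum_f_R0 (fun i => f (S i)) n.
Proof. apply decomp_sum. lia. Qed.

Lemma sum_f_R0_last_zero (f : nat -> R) n :
  f (S n) = 0 -> sum_f_R0 f (S n) = sum_f_R0 f n.
Proof. intros H; simpl; rewrite H; ring. Qed.

Lemma sum_f_R0_pad (f : nat -> R) a b :
  (forall i, (a < i)%nat -> f i = 0) -> sum_f_R0 f (a + b) = sum_f_R0 f a.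
Proof.
  intros H; induction b as [|b IH]; [now rewrite Nat.add_0_r|].
  rewrite Nat.add_succ_r; simpl. rewrite IH, H by lia. ring.
Qed.

(* [taylor_falling c N m] is the coefficient of z^m in the shifted falling
   factorial (z+c)(z+c-1)...(z+c-N+1) = sum_k s(N,k) (z+c)^k, obtained by
   expanding each (z+c)^k binomially. *)
Definition taylor_falling (c : R) (N m : nat) : R :=
  sum_f_R0 (fun l => binom (m + l) m * stirling1 N (m + l) * c ^ l) N.

Definition taylor_falling_1 (c : R) (N m : nat) : R :=
  match m with O => 0 | S m' => taylor_falling c N m' end.
Definition taylor_falling_2 (c : R) (N m : nat) : R :=
  match m with S (S m') => taylor_falling c N m' | _ => 0 end.

Lemma taylor_falling_0 c m : taylor_falling c 0 m = match m with O => 1 | _ => 0 end.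
Proof. unfold taylor_falling. destruct m; simpl; ring. Qed.

(* Multiplying by the last factor (z + c - N). *)
Lemma taylor_falling_last c N m :
  taylor_falling c (S N) m = taylor_falling_1 c N m + (c - INR N) * taylor_falling c N m.
Proof.
  unfold taylor_falling_1, taylor_falling.
  set (w := fun k l => binom (k + l) k * stirling1 N (k + l) * c ^ l).
  assert (Htop : forall k, w k (S N) = 0).
  { intros k. unfold w. rewrite stirling1_above by lia. ring. }
  destruct m as [|m].
  - transitivity (sum_f_R0 (fun i => w O i * c) N
                  - INR N * sum_f_R0 (fun i => w O (S i)) N).
    + rewrite sum_f_R0_first, scal_sum, <- minus_sum. simpl.
      rewrite Rmult_0_r, Rmult_0_l, Rplus_0_l.
      apply sum_eq; intros i _. unfold w. simpl. rewrite binom_0. ring.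
    + rewrite <- scal_sum.
      pose proof (sum_f_R0_first (w O) N) as E.
      rewrite sum_f_R0_last_zero in E by apply Htop.
      assert (Hw0 : INR N * w O O = 0) by (unfold w; destruct N; simpl; ring).
      fold (w O). nra.
  - transitivity (sum_f_R0 (w m) (S N)
       + sum_f_R0 (fun l => binom (m + l) (S m) * stirling1 N (m + l) * c ^ l) (S N)
       - INR N * sum_f_R0 (w (S m)) (S N)).
    + rewrite <- plus_sum, scal_sum, <- minus_sum.
      apply sum_eq; intros i _. unfold w. simpl Nat.add.
      rewrite stirling1_S. simpl binom. ring.
    + rewrite (sum_f_R0_last_zero (w m)), (sum_f_R0_last_zero (w (S m))) by apply Htop.
      rewrite sum_f_R0_first, Nat.add_0_r, (binom_above m (S m)) by lia.
      assert (Hshift : sum_f_R0 (fun i => binom (m + S i) (S m)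
                                   * stirling1 N (m + S i) * c ^ S i) N
                       = c * sum_f_R0 (w (S m)) N).
      { rewrite scal_sum. apply sum_eq; intros i _. unfold w.
        rewrite <- plus_n_Sm. simpl. ring. }
      rewrite Hshift. unfold w. ring.
Qed.

(* Peeling off the first factor (z + c) instead:
   (z+c)(z+c-1)...(z+c-N) = (z+c) * [(z+(c-1))...(z+(c-1)-N+1)]. *)
Lemma taylor_falling_first N c m :
  taylor_falling c (S N) m = taylor_falling_1 (c - 1) N m + c * taylor_falling (c - 1) N m.
Proof.
  revert c m; induction N as [|N IH]; intros c m.
  - rewrite taylor_falling_last. unfold taylor_falling_1.
    destruct m as [|[|m]]; rewrite ?taylor_falling_0; simpl; ring.
  - rewrite taylor_falling_last, (taylor_falling_last (c - 1)), IH, S_INR.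
    destruct m as [|m]; cbn [taylor_falling_1]; [ring|].
    rewrite (taylor_falling_last (c - 1) N m), IH. cbn [taylor_falling_1]. ring.
Qed.

(* Two factors at once, symmetrically placed: for c = (N+1)/2 the product
   gains the factor (z + c)(z - c) = z^2 - c^2 around the centre (N-1)/2. *)
Lemma taylor_falling_central N m :
  taylor_falling ((INR N + 1) / 2) (S (S N)) m =
  taylor_falling_2 ((INR N - 1) / 2) N m
  - ((INR N + 1) / 2) ^ 2 * taylor_falling ((INR N - 1) / 2) N m.
Proof.
  rewrite taylor_falling_last, taylor_falling_first.
  replace ((INR N + 1) / 2 - 1) with ((INR N - 1) / 2) by field.
  destruct m as [|m].
  - cbn [taylor_falling_1 taylor_falling_2]. rewrite S_INR. field.
  - unfold taylor_falling_1 at 1. rewrite taylor_falling_first.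
    replace ((INR N + 1) / 2 - 1) with ((INR N - 1) / 2) by field.
    destruct m as [|m]; cbn [taylor_falling_1 taylor_falling_2]; rewrite S_INR; field.
Qed.

(* The numbers t(n,m) = (n!/m!) [t^n] (arcsinh t)^m / sqrt(1+t^2), given by
   t(0,m) = [m = 0], t(1,m) = [m = 1] and
   t(n+2,m) = t(n,m-2) - (n+1)^2 t(n,m). *)
Fixpoint tcoef (n m : nat) : R :=
  match n with
  | O => match m with O => 1 | _ => 0 end
  | S O => match m with 1%nat => 1 | _ => 0 end
  | S (S n') =>
      match m with S (S m') => tcoef n' m' | _ => 0 end - (INR n' + 1) ^ 2 * tcoef n' m
  end.

Definition tcoef_2 (n m : nat) : R :=
  match m with S (S m') => tcoef n m' | _ => 0 end.

Lemma tcoef_SS n m : tcoef (S (S n)) m = tcoef_2 n m - (INR n + 1) ^ 2 * tcoef n m.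
Proof. reflexivity. Qed.

Lemma nat_ind2 (P : nat -> Prop) :
  P O -> P 1%nat -> (forall n, P n -> P (S (S n))) -> forall n, P n.
Proof.
  intros H0 H1 HS n. enough (P n /\ P (S n)) by tauto.
  induction n as [|n [IHn IHSn]]; auto.
Qed.

Lemma tcoef_taylor_falling N m :
  tcoef N m * 2 ^ m = 2 ^ N * taylor_falling ((INR N - 1) / 2) N m.
Proof.
  revert m; induction N as [| |N IH] using nat_ind2; intros m.
  - rewrite taylor_falling_0. destruct m; simpl; ring.
  - replace ((INR 1 - 1) / 2) with 0 by (simpl; field).
    unfold taylor_falling. destruct m as [|[|m]]; simpl; ring.
  - replace ((INR (S (S N)) - 1) / 2) with ((INR N + 1) / 2) by (rewrite !S_INR; field).
    rewrite taylor_falling_central, tcoef_SS, Rmult_minus_distr_r, Rmult_assoc, IH.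
    destruct m as [|[|m]]; cbn [tcoef_2 taylor_falling_2]; [simpl; field..|].
    replace (tcoef N m * 2 ^ S (S m)) with (4 * (tcoef N m * 2 ^ m)) by (simpl; ring).
    rewrite IH. simpl. field.
Qed.

Lemma Q_taylor_falling m k :
  Q (m + 1) (2 * k) 2 = taylor_falling ((INR (m + 2 * k) - 1) / 2) (m + 2 * k) m.
Proof.
  unfold Q, taylor_falling. rewrite (Nat.add_comm m (2 * k)).
  rewrite (sum_f_R0_pad _ (2 * k) m).
  2:{ intros i Hi. rewrite stirling1_above by lia. ring. }
  apply sum_eq. intros i Hi.
  replace (m + 1 + i - 1)%nat with (m + i)%nat by lia.
  replace (m + 1 - 1)%nat with m by lia.
  replace (m + 1 + 2 * k - 1)%nat with (2 * k + m)%nat by lia.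
  replace ((INR (m + 1 + 2 * k) - 2) / 2) with ((INR (2 * k + m) - 1) / 2)
    by (rewrite !plus_INR; simpl; field).
  rewrite binom_C by lia. reflexivity.
Qed.

Lemma tcoef_Q m k : tcoef (m + 2 * k) m = 2 ^ (2 * k) * Q (m + 1) (2 * k) 2.
Proof.
  pose proof (tcoef_taylor_falling (m + 2 * k) m) as H.
  rewrite <- Q_taylor_falling, pow_add in H.
  apply Rmult_eq_reg_r with (2 ^ m); [lra|apply pow_nonzero; lra].
Qed.

Lemma tcoef_above n m : (n < m)%nat -> tcoef n m = 0.
Proof.
  revert m; induction n as [| |n IH] using nat_ind2; intros m Hm.
  - destruct m; [lia|reflexivity].
  - destruct m as [|[|m]]; [lia|lia|reflexivity].
  - rewrite tcoef_SS. unfold tcoef_2. destruct m as [|[|m]]; try lia.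
    rewrite !IH by lia. ring.
Qed.

Lemma tcoef_diag n : tcoef n n = 1.
Proof.
  induction n as [| |n IH] using nat_ind2; try reflexivity.
  rewrite tcoef_SS. simpl tcoef_2. rewrite IH, (tcoef_above n (S (S n))) by lia. ring.
Qed.

Lemma tcoef_odd n m j : (n + m = 2 * j + 1)%nat -> tcoef n m = 0.
Proof.
  revert m j; induction n as [| |n IH] using nat_ind2; intros m j Hnm.
  - destruct m; [lia|reflexivity].
  - destruct m as [|[|m]]; [reflexivity|lia|reflexivity].
  - rewrite tcoef_SS. unfold tcoef_2.
    destruct m as [|[|m]]; [rewrite (IH 0%nat (j - 1)%nat) by lia; ring
                          | rewrite (IH 1%nat (j - 1)%nat) by lia; ring |].
    rewrite (IH m (j - 2)%nat), (IH (S (S m)) (j - 1)%nat) by lia. ring.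
Qed.

Lemma fact_S_INR n : INR (Factorial.fact (S n)) = (INR n + 1) * INR (Factorial.fact n).
Proof. change (Factorial.fact (S n)) with (S n * Factorial.fact n)%nat.
  rewrite mult_INR, S_INR. reflexivity. Qed.

(* |t(n,m)| <= n!, since 1 + (n+1)^2 <= (n+2)(n+1). *)
Lemma tcoef_bound n m : Rabs (tcoef n m) <= INR (Factorial.fact n).
Proof.
  revert m; induction n as [| |n IH] using nat_ind2; intros m.
  - destruct m; simpl; rewrite ?Rabs_R1, ?Rabs_R0; lra.
  - destruct m as [|[|m]]; simpl; rewrite ?Rabs_R1, ?Rabs_R0; lra.
  - assert (H2 : Rabs (tcoef_2 n m) <= INR (Factorial.fact n)).
    { unfold tcoef_2; destruct m as [|[|m]]; rewrite ?Rabs_R0; auto using pos_INR. }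
    rewrite tcoef_SS, !fact_S_INR, S_INR.
    pose proof (IH m). pose proof (pos_INR n). pose proof (pos_INR (Factorial.fact n)).
    eapply Rle_trans; [apply Rabs_triang|].
    rewrite Rabs_Ropp, Rabs_mult, (Rabs_right ((INR n + 1) ^ 2)) by nra.
    nra.
Qed.

(* Taylor coefficients of y_m(t) = (arcsinh t)^m / sqrt(1 + t^2). *)
Definition ycoef (m n : nat) : R :=
  INR (Factorial.fact m) * tcoef n m / INR (Factorial.fact n).

(* Taylor coefficients of (arcsinh t)^m: the constant series 1 for m = 0, and
   the termwise antiderivative of (m+1) y_m for m+1, because
   (arcsinh^(m+1))' = (m+1) arcsinh^m / sqrt(1+t^2). *)
Definition acoef (m : nat) : nat -> R :=
  match m with
  | O => fun n => match n with O => 1 | S _ => 0 end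
  | S m' => PS_Int (PS_scal (INR (S m')) (ycoef m'))
  end.

Lemma bounded_coef_radius (a : nat -> R) (K x : R) :
  (forall n, Rabs (a n) <= K) -> Rabs x < 1 -> Rbar_lt (Rabs x) (CV_radius a).
Proof.
  intros Ha Hx. apply Rbar_lt_le_trans with (Finite 1); [exact Hx|].
  apply (proj1 (CV_radius_bounded a)). exists K. intros n.
  rewrite pow1, Rmult_1_r. apply Ha.
Qed.

Lemma ycoef_bound m n : Rabs (ycoef m n) <= INR (Factorial.fact m).
Proof.
  pose proof (tcoef_bound n m). pose proof (INR_fact_lt_0 m).
  pose proof (INR_fact_lt_0 n). unfold ycoef.
  rewrite Rabs_div, Rabs_mult, (Rabs_right (INR (Factorial.fact m))),
    (Rabs_right (INR (Factorial.fact n))) by lra.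
  assert (Hq : Rabs (tcoef n m) / INR (Factorial.fact n) <= 1).
  { unfold Rdiv. apply Rmult_le_reg_r with (INR (Factorial.fact n)); [lra|].
    rewrite Rmult_assoc, Rinv_l, Rmult_1_r, Rmult_1_l by lra. exact H. }
  unfold Rdiv in *. rewrite Rmult_assoc. nra.
Qed.

Lemma ycoef_radius m x : Rabs x < 1 -> Rbar_lt (Rabs x) (CV_radius (ycoef m)).
Proof. apply bounded_coef_radius with (INR (Factorial.fact m)), ycoef_bound. Qed.

Lemma acoef_radius m x : Rabs x < 1 -> Rbar_lt (Rabs x) (CV_radius (acoef m)).
Proof.
  destruct m as [|m]; intros Hx.
  - apply bounded_coef_radius with 1; [|exact Hx].
    intros [|n]; simpl acoef; [rewrite Rabs_R1 | rewrite Rabs_R0]; lra.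
  - cbn [acoef]. rewrite CV_radius_Int, CV_radius_scal by apply not_0_INR, Nat.neq_succ_0.
    now apply ycoef_radius.
Qed.

Lemma PS_derive_Int (a : nat -> R) n : PS_derive (PS_Int a) n = a n.
Proof.
  unfold PS_derive, PS_Int. field. apply not_0_INR, Nat.neq_succ_0.
Qed.

Lemma acoef_0_series x : Rabs x < 1 -> PSeries (acoef 0) x = 1.
Proof.
  intros Hx. rewrite PSeries_decr_1.
  - rewrite (PSeries_ext (PS_decr_1 (acoef 0)) (fun _ => 0)) by reflexivity.
    rewrite PSeries_const_0. simpl. ring.
  - now apply CV_radius_inside, acoef_radius.
Qed.

Lemma PS_incr_1_derive (a : nat -> R) n : PS_incr_1 (PS_derive a) n = INR n * a n.
Proof. destruct n as [|n]; [apply eq_sym, Rmult_0_l | reflexivity]. Qed.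

(* Coefficientwise form of the differential equation
   (1 + t^2) y_m' + t y_m = m (arcsinh t)^(m-1):
   it is exactly the recurrence defining t(n+2,m). *)
Lemma ycoef_ode m n :
  PS_derive (ycoef m) n + PS_incr_1 (PS_incr_1 (PS_derive (ycoef m))) n
  + PS_incr_1 (ycoef m) n
  = INR m * acoef (pred m) n.
Proof.
  destruct n as [|N].
  - unfold PS_derive, ycoef; simpl PS_incr_1; unfold zero; simpl.
    destruct m as [|[|m]]; simpl; field.
  - change (PS_incr_1 (PS_incr_1 (PS_derive (ycoef m))) (S N))
      with (PS_incr_1 (PS_derive (ycoef m)) N).
    rewrite PS_incr_1_derive. change (PS_incr_1 (ycoef m) (S N)) with (ycoef m N).
    unfold PS_derive, ycoef.
    rewrite tcoef_SS, !fact_S_INR, !S_INR.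
    pose proof (INR_fact_lt_0 N). pose proof (INR_fact_lt_0 m). pose proof (pos_INR N).
    destruct m as [|[|m]]; cbn [tcoef_2 pred].
    + simpl. field. lra.
    + simpl. field. lra.
    + change (acoef (S m) (S N)) with (INR (S m) * ycoef m N / INR (S N)).
      unfold ycoef. rewrite !fact_S_INR, !S_INR. field. lra.
Qed.

Lemma yseries_ode m x : Rabs x < 1 ->
  (1 + x ^ 2) * PSeries (PS_derive (ycoef m)) x + x * PSeries (ycoef m) x
  = INR m * PSeries (acoef (pred m)) x.
Proof.
  intros Hx.
  set (d := PS_derive (ycoef m)).
  assert (Hd : Rbar_lt (Rabs x) (CV_radius d))
    by (unfold d; rewrite CV_radius_derive; now apply ycoef_radius).
  assert (Ed : ex_pseries d x) by now apply CV_radius_inside.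
  assert (Ed2 : ex_pseries (PS_incr_1 (PS_incr_1 d)) x)
    by (apply CV_radius_inside; now rewrite !CV_radius_incr_1).
  assert (Ey : ex_pseries (PS_incr_1 (ycoef m)) x)
    by (apply CV_radius_inside; rewrite CV_radius_incr_1; now apply ycoef_radius).
  transitivity (PSeries (PS_plus (PS_plus d (PS_incr_1 (PS_incr_1 d)))
                                 (PS_incr_1 (ycoef m))) x).
  - rewrite PSeries_plus, PSeries_plus, !PSeries_incr_1 by auto using ex_pseries_plus.
    simpl. ring.
  - rewrite <- PSeries_scal. apply PSeries_ext. intros n. apply ycoef_ode.
Qed.

Lemma constant_on_unit_interval (h : R -> R) t :
  (forall c, Rabs c < 1 -> is_derive h c 0) -> Rabs t < 1 -> h t = h 0.
Proof.
  intros Hd Ht.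
  destruct (MVT_cor4 h (fun _ => 0) 0 (Rabs t)) with (b := t) as [c [Hc _]].
  - intros c Hc. apply Hd. rewrite Rminus_0_r in Hc. lra.
  - rewrite Rminus_0_r. lra.
  - lra.
Qed.

Lemma sqrt_1_plus_sq_pos x : 0 < sqrt (1 + x ^ 2).
Proof. apply sqrt_lt_R0. nra. Qed.

Lemma sqrt_1_plus_sq_derive x :
  is_derive (fun y => sqrt (1 + y ^ 2)) x (x / sqrt (1 + x ^ 2)).
Proof.
  pose proof (sqrt_1_plus_sq_pos x). auto_derive; [nra|].
  replace (x * (x * 1)) with (x ^ 2) by ring. field. lra.
Qed.

Lemma arcsinh_pow_derive m x :
  is_derive (fun y => arcsinh y ^ m) x
    (INR m * / sqrt (1 + x ^ 2) * arcsinh x ^ pred m).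
Proof.
  apply is_derive_pow, is_derive_Reals.
  rewrite Rplus_comm. apply derivable_pt_lim_arcsinh.
Qed.

Lemma ycoef_at_0 m : ycoef m 0 = 0 ^ m.
Proof. unfold ycoef. destruct m; simpl; field. Qed.

(* If (arcsinh x)^(m-1) is the sum of its series on (-1,1), so is y_m:
   sqrt(1+x^2) Y(x) - (arcsinh x)^m has derivative
   (x Y + (1+x^2) Y' - m (arcsinh x)^(m-1)) / sqrt(1+x^2) = 0 and
   vanishes at 0. *)
Lemma yseries_closed_form m :
  (forall x, Rabs x < 1 -> PSeries (acoef (pred m)) x = arcsinh x ^ pred m) ->
  forall t, Rabs t < 1 -> PSeries (ycoef m) t = arcsinh t ^ m / sqrt (1 + t ^ 2).
Proof.
  intros Hprev t Ht.
  assert (Hconst :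
    sqrt (1 + t ^ 2) * PSeries (ycoef m) t - arcsinh t ^ m
    = sqrt (1 + 0 ^ 2) * PSeries (ycoef m) 0 - arcsinh 0 ^ m).
  { apply (constant_on_unit_interval
             (fun x => sqrt (1 + x ^ 2) * PSeries (ycoef m) x - arcsinh x ^ m));
      [|exact Ht].
    intros c Hc.
    pose proof (is_derive_minus _ _ c _ _
      (is_derive_mult _ _ c _ _ (sqrt_1_plus_sq_derive c)
         (is_derive_PSeries _ c (ycoef_radius m c Hc)) Rmult_comm)
      (arcsinh_pow_derive m c)) as HD.
    match type of HD with is_derive _ _ ?l => replace 0 with l; [exact HD|] end.
    pose proof (yseries_ode m c Hc) as Hode. rewrite Hprev in Hode by exact Hc.
    pose proof (sqrt_1_plus_sq_pos c) as Hq.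
    pose proof (sqrt_sqrt (1 + c ^ 2) ltac:(nra)) as Hq2.
    set (q := sqrt (1 + c ^ 2)) in *.
    unfold minus, plus, mult, opp; simpl.
    apply Rmult_eq_reg_r with q; [|lra].
    replace ((c / q * PSeries (ycoef m) c + q * PSeries (PS_derive (ycoef m)) c
              + - (INR m * / q * arcsinh c ^ pred m)) * q)
      with (c * PSeries (ycoef m) c + (q * q) * PSeries (PS_derive (ycoef m)) c
            - INR m * arcsinh c ^ pred m) by (field; lra).
    rewrite Hq2. lra. }
  replace (1 + 0 ^ 2) with 1 in Hconst by ring.
  rewrite PSeries_0, ycoef_at_0, arcsinh_0, sqrt_1 in Hconst.
  pose proof (sqrt_1_plus_sq_pos t).
  apply Rmult_eq_reg_l with (sqrt (1 + t ^ 2)); [|lra].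
  field_simplify; lra.
Qed.

(* If y_m is the sum of its series on (-1,1), so is (arcsinh x)^(m+1): both
   sides have derivative (m+1) y_m and vanish at 0. *)
Lemma aseries_closed_form m :
  (forall x, Rabs x < 1 -> PSeries (ycoef m) x = arcsinh x ^ m / sqrt (1 + x ^ 2)) ->
  forall t, Rabs t < 1 -> PSeries (acoef (S m)) t = arcsinh t ^ S m.
Proof.
  intros Hy t Ht.
  assert (Hconst : PSeries (acoef (S m)) t - arcsinh t ^ S m
                   = PSeries (acoef (S m)) 0 - arcsinh 0 ^ S m).
  { apply (constant_on_unit_interval
             (fun x => PSeries (acoef (S m)) x - arcsinh x ^ S m)); [|exact Ht].
    intros c Hc.
    pose proof (is_derive_minus _ _ c _ _
      (is_derive_PSeries _ c (acoef_radius (S m) c Hc))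
      (arcsinh_pow_derive (S m) c)) as HD.
    match type of HD with is_derive _ _ ?l => replace 0 with l; [exact HD|] end.
    assert (Hder : PSeries (PS_derive (acoef (S m))) c = INR (S m) * PSeries (ycoef m) c).
    { rewrite <- PSeries_scal. apply PSeries_ext. intros n. apply PS_derive_Int. }
    rewrite Hder, Hy by exact Hc. unfold minus, plus, opp; simpl.
    field. apply Rgt_not_eq, sqrt_1_plus_sq_pos. }
  rewrite PSeries_0, arcsinh_0, pow_i in Hconst by lia.
  change (acoef (S m) 0%nat) with 0 in Hconst. lra.
Qed.

Lemma closed_forms m :
  (forall x, Rabs x < 1 -> PSeries (acoef m) x = arcsinh x ^ m) /\
  (forall x, Rabs x < 1 -> PSeries (ycoef m) x = arcsinh x ^ m / sqrt (1 + x ^ 2)).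
Proof.
  induction m as [|m [Ha Hy]].
  - assert (Ha : forall x, Rabs x < 1 -> PSeries (acoef 0) x = arcsinh x ^ 0)
      by exact acoef_0_series.
    exact (conj Ha (yseries_closed_form 0 Ha)).
  - exact (conj (aseries_closed_form m Hy) (yseries_closed_form (S m) Ha)).
Qed.

Lemma series_along_subsequence (u v : nat -> R) (phi : nat -> nat) (A B Lv : R) :
  (forall n, (phi n < phi (S n))%nat) -> ex_series u -> is_series v Lv ->
  (forall J, sum_f_R0 u (phi J) = A + B * sum_f_R0 v J) ->
  Series u = A + B * Lv.
Proof.
  intros Hphi Hu Hv Hsums.
  assert (Hlim_u : is_lim_seq (fun J => sum_n u (phi J)) (Series u)).
  { apply is_lim_seq_subseq; [now apply eventually_subseq|].
    exact (Series_correct u Hu). }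
  assert (Hlim_v : is_lim_seq (fun J => A + B * sum_n v J) (A + B * Lv)).
  { apply is_lim_seq_plus'; [apply is_lim_seq_const|].
    exact (is_lim_seq_scal_l _ B Lv Hv). }
  apply (is_lim_seq_ext _ (fun J => A + B * sum_n v J)) in Hlim_u;
    [|intros J; rewrite !sum_n_Reals; apply Hsums].
  apply is_lim_seq_unique in Hlim_u, Hlim_v.
  rewrite Hlim_u in Hlim_v. now injection Hlim_v.
Qed.

Definition theorem_term (m : nat) (t : R) (j : nat) : R :=
  let k := (j + 1)%nat in
  Q (m + 1) (2 * k) 2 / Binomial.C (m + 2 * k) m
  * (2 * t) ^ (2 * k) / INR (Factorial.fact (2 * k)).

Lemma ycoef_even m k t :
  ycoef m (m + 2 * k) * t ^ (2 * k) =
  Q (m + 1) (2 * k) 2 / Binomial.C (m + 2 * k) m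
  * (2 * t) ^ (2 * k) / INR (Factorial.fact (2 * k)).
Proof.
  unfold ycoef, Binomial.C. rewrite tcoef_Q, Rpow_mult_distr.
  replace (m + 2 * k - m)%nat with (2 * k)%nat by lia.
  pose proof (INR_fact_lt_0 m). pose proof (INR_fact_lt_0 (2 * k)).
  pose proof (INR_fact_lt_0 (m + 2 * k)).
  field. repeat split; lra.
Qed.

Lemma theorem_term_summable m t : Rabs t < 1 -> ex_series (theorem_term m t).
Proof.
  intros Ht.
  apply (@ex_series_le R_AbsRing R_CompleteNormedModule _ (fun j => INR (Factorial.fact m) * t ^ 2 * (t ^ 2) ^ j)).
  - intros j. change (norm (theorem_term m t j)) with (Rabs (theorem_term m t j)).
    unfold theorem_term. cbv zeta. rewrite <- ycoef_even.
    rewrite Rabs_mult, pow_mult, Nat.add_1_r, (Rabs_right ((t ^ 2) ^ S j))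
      by (apply Rle_ge, pow_le; nra).
    rewrite Rmult_assoc. apply Rmult_le_compat_r; [|apply ycoef_bound].
    apply (pow_le (t ^ 2) (S j)). nra.
  - assert (Hq : Rabs (t ^ 2) < 1) by (rewrite <- RPow_abs; simpl; pose proof (Rabs_pos t); nra).
    exact (ex_series_scal (INR (Factorial.fact m) * t ^ 2) (fun n => (t ^ 2) ^ n)
             (ex_series_geom _ Hq)).
Qed.

Lemma ycoef_below m n : (n < m)%nat -> ycoef m n = 0.
Proof. intros H. unfold ycoef. rewrite tcoef_above by exact H. unfold Rdiv. ring. Qed.

Lemma ycoef_diag m : ycoef m m = 1.
Proof. unfold ycoef. rewrite tcoef_diag. field. apply INR_fact_neq_0. Qed.

Lemma ycoef_odd m j : ycoef m (m + 2 * j + 1) = 0.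
Proof. unfold ycoef. rewrite (tcoef_odd _ _ (m + j)) by lia. unfold Rdiv. ring. Qed.

Lemma ypartial_initial m t : sum_f_R0 (fun n => ycoef m n * t ^ n) m = t ^ m.
Proof.
  assert (Hbelow : forall n, (n < m)%nat -> sum_f_R0 (fun n => ycoef m n * t ^ n) n = 0).
  { induction n as [|n IH]; intros Hn; simpl;
      [|rewrite IH by lia]; rewrite ycoef_below by lia; ring. }
  destruct m as [|m]; simpl; [rewrite ycoef_diag; ring|].
  rewrite Hbelow, ycoef_diag by lia. ring.
Qed.

Lemma ypartial_step m t J :
  sum_f_R0 (fun n => ycoef m n * t ^ n) (m + 2 * S J)
  = sum_f_R0 (fun n => ycoef m n * t ^ n) (m + 2 * J) + t ^ m * theorem_term m t J.
Proof.
  replace (m + 2 * S J)%nat with (S (S (m + 2 * J))) by lia. rewrite !tech5.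
  replace (S (m + 2 * J)) with (m + 2 * J + 1)%nat by lia.
  replace (S (m + 2 * J + 1)) with (m + 2 * (J + 1))%nat by lia.
  rewrite ycoef_odd, (pow_add t m (2 * (J + 1))).
  unfold theorem_term. cbv zeta. rewrite <- ycoef_even. ring.
Qed.

Lemma ypartial_sums m t J :
  sum_f_R0 (fun n => ycoef m n * t ^ n) (m + 2 * S J)
  = t ^ m * (1 + sum_f_R0 (theorem_term m t) J).
Proof.
  induction J as [|J IH]; rewrite ypartial_step.
  - rewrite Nat.mul_0_r, Nat.add_0_r, ypartial_initial. simpl. ring.
  - rewrite IH. simpl. ring.
Qed.

Theorem mainTheorem13 (m : nat) (t : R) (ht : Rabs t < 1) :
  exists L : R,
    is_series (fun j : nat =>
                 let k := (j + 1)%nat in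
                 Q (m + 1) (2 * k) 2 / Binomial.C (m + 2 * k) m
                 * (2 * t) ^ (2 * k) / INR (Factorial.fact (2 * k))) L
    /\ (arcsinh t) ^ m / sqrt (1 + t ^ 2) = t ^ m * (1 + L).
Proof.
  pose proof (Series_correct _ (theorem_term_summable m t ht)) as HL.
  exists (Series (theorem_term m t)). split; [exact HL|].
  destruct (closed_forms m) as [_ Hy]. rewrite <- (Hy t ht).
  unfold PSeries.
  rewrite (series_along_subsequence _ (theorem_term m t) (fun J => m + 2 * S J)%nat
             (t ^ m) (t ^ m) (Series (theorem_term m t))); [ring | ..].
  - intros n. lia.
  - exact (ex_series_Rabs _ (CV_disk_inside _ _ (ycoef_radius m t ht))).
  - exact HL.
  - intros J. rewrite ypartial_sums. ring.
Qed.
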